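(* Let $X$ satisfy (P1) and (P2), and let $\alpha$ be a saddle connection on $X$ which is neither a side nor a diagonal of a polygon, with polygonal decomposition $\alpha=\alpha_1\cup\dots\cup\alpha_k$. Then \[ \left\lceil \tfrac{k}{2}\right\rceil \le p_\alpha+q_\alpha, \] with equality if and only if $\alpha$ is odd.
   Context: $X$ is a translation surface obtained from finitely many Euclidean polygons by gluing pairs of parallel sides of equal length by translations, with (P1): each polygon convex with all angles obtuse or right; (P2): no two sides of the same polygon are identified. Saddle connection: straight segment between singularities (images of vertices) with none in its interior; a diagonal is a segment inside a polygon joining two non-adjacent vertices. Polygonal decomposition: cut $\alpha$ each time it passes from one polygon to another, giving consecutive segments $\alpha_1,\dots,\alpha_k$ ($k\ge2$ here), each in one polygon; $\alpha_1$ and $\alpha_k$ are non-adjacent. A segment in polygon $P$ is adjacent if it goes from the relative interior of a side $e$ of $P$ to the relative interior of a side adjacent to $e$; otherwise non-adjacent. $p_\alpha$ = number of non-adjacent segments; $q_\alpha=\sum\lfloor r/2\rfloor$ over maximal runs of consecutive adjacent segments of size $r$. $\alpha$ is odd if no two non-adjacent segments are consecutive and between any two consecutive non-adjacent segments there is an odd number of adjacent segments. *)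

From HB Require Import structures.
From mathcomp Require Import all_boot all_order all_algebra.
Set Implicit Arguments. Unset Strict Implicit. Unset Printing Implicit Defensive.
Import Order.TTheory GRing.Theory Num.Theory.
Local Open Scope ring_scope.

Section TranslationSurfaces.
Variable R : realFieldType.

Definition pt := (R * R)%type.
Definition vsub (u v : pt) : pt := (u.1 - v.1, u.2 - v.2).
Definition vadd (u v : pt) : pt := (u.1 + v.1, u.2 + v.2).
Definition vscale (t : R) (u : pt) : pt := (t * u.1, t * u.2).
Definition cross (u v : pt) : R := u.1 * v.2 - u.2 * v.1.
Definition dot (u v : pt) : R := u.1 * v.1 + u.2 * v.2.

(* A polygon is the list of its vertices, in counterclockwise order;
   vertices and sides are indexed cyclically. Side i goes from vertex i
   to vertex i+1. *)
Definition polygon := seq pt.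
Definition vtx (P : polygon) (i : nat) : pt := nth (0, 0) P (i %% size P).
Definition side_vec (P : polygon) (i : nat) : pt := vsub (vtx P i.+1) (vtx P i).

Definition convex_polygon (P : polygon) : Prop :=
  (3 <= size P)%N /\
  forall i j, (i < size P)%N -> (j < size P)%N -> j != i -> j != (i.+1 %% size P)%N ->
    0 < cross (side_vec P i) (vsub (vtx P j) (vtx P i)).

Definition angles_obtuse_or_right (P : polygon) : Prop :=
  forall i, (i < size P)%N ->
    dot (vsub (vtx P i) (vtx P i.+1)) (vsub (vtx P i.+2) (vtx P i.+1)) <= 0.

Definition in_interior (P : polygon) (x : pt) : Prop :=
  forall i, (i < size P)%N -> 0 < cross (side_vec P i) (vsub x (vtx P i)).

Definition on_side_relint (P : polygon) (i : nat) (x : pt) : bool :=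
  (cross (side_vec P i) (vsub x (vtx P i)) == 0) &&
  (0 < dot (side_vec P i) (vsub x (vtx P i)) < dot (side_vec P i) (side_vec P i)).

Definition is_vertex (P : polygon) (x : pt) : Prop :=
  exists2 i, (i < size P)%N & x = vtx P i.

(* A side of the surface is a pair (polygon index, side index). *)
Definition valid_side (polys : seq polygon) (s : nat * nat) : Prop :=
  (s.1 < size polys)%N /\ (s.2 < size (nth [::] polys s.1))%N.

Definition sideP (polys : seq polygon) (s : nat * nat) : polygon := nth [::] polys s.1.

(* Translation surface given by finitely many polygons and a pairing
   [glue] of their sides: paired sides are parallel, of equal length and
   are identified by a translation (for counterclockwise polygons this
   means the side vectors are opposite). *)
Definition translation_surface (polys : seq polygon) (glue : nat * nat -> nat * nat) : Prop :=
  (0 < size polys)%N /\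
  (forall P, P \in polys -> (3 <= size P)%N) /\
  forall s, valid_side polys s ->
    [/\ valid_side polys (glue s), glue (glue s) = s, glue s <> s &
        side_vec (sideP polys (glue s)) (glue s).2 =
        vscale (-1) (side_vec (sideP polys s) s.2)].

Definition P1 (polys : seq polygon) : Prop :=
  forall P, P \in polys -> convex_polygon P /\ angles_obtuse_or_right P.

Definition P2 (polys : seq polygon) (glue : nat * nat -> nat * nat) : Prop :=
  forall s, valid_side polys s -> (glue s).1 <> s.1.

(* A segment of the polygonal decomposition: a polygon index and the
   initial and final points (in the coordinates of that polygon). *)
Record segment := Segment { seg_poly : nat; seg_start : pt; seg_end : pt }.

Definition seg0 : segment := Segment 0 (0, 0) (0, 0).

Definition segP (polys : seq polygon) (g : segment) : polygon := nth [::] polys (seg_poly g).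

(* [segs] is the polygonal decomposition alpha_1, ..., alpha_k of a saddle
   connection alpha (which is not a side of a polygon): a straight
   trajectory (all pieces have the same direction) that starts and ends
   at vertices, whose pieces have their interiors inside the polygons,
   and which passes from one polygon to the next through the relative
   interior of a side, following the gluing translation. *)
Definition saddle_connection_decomp (polys : seq polygon)
    (glue : nat * nat -> nat * nat) (segs : seq segment) : Prop :=
  [/\ (0 < size segs)%N,
      (forall g, (exists2 i, (i < size segs)%N & g = nth seg0 segs i) -> (seg_poly g < size polys)%N),
      (exists2 d : pt, d != (0, 0) & forall g, (exists2 i, (i < size segs)%N & g = nth seg0 segs i) ->
          exists2 t : R, 0 < t & vsub (seg_end g) (seg_start g) = vscale t d),
      (forall g, (exists2 i, (i < size segs)%N & g = nth seg0 segs i) -> forall t : R, 0 < t < 1 ->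
          in_interior (segP polys g) (vadd (seg_start g) (vscale t (vsub (seg_end g) (seg_start g))))) &
   [/\ is_vertex (segP polys (head seg0 segs)) (seg_start (head seg0 segs)),
      is_vertex (segP polys (last seg0 segs)) (seg_end (last seg0 segs)) &
      forall i, (i.+1 < size segs)%N ->
        let g := nth seg0 segs i in
        let g' := nth seg0 segs i.+1 in
        exists2 e, (e < size (segP polys g))%N &
          [/\ on_side_relint (segP polys g) e (seg_end g),
              seg_poly g' = (glue (seg_poly g, e)).1 &
              seg_start g' =
                vadd (vsub (seg_end g) (vtx (segP polys g) e))
                     (vtx (sideP polys (glue (seg_poly g, e))) (glue (seg_poly g, e)).2.+1)]]].

Definition adjacent_seg (polys : seq polygon) (g : segment) : bool :=
  let P := segP polys g in
  let n := size P in
  has (fun e => has (fun e' =>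
        [&& on_side_relint P e (seg_start g), on_side_relint P e' (seg_end g) &
            (e' == (e.+1 %% n)%N) || (e == (e'.+1 %% n)%N)]) (iota 0 n)) (iota 0 n).

Fixpoint runs_aux (r : nat) (s : seq bool) : seq nat :=
  match s with
  | [::] => if r is 0 then [::] else [:: r]
  | true :: s' => runs_aux r.+1 s'
  | false :: s' => (if r is 0 then [::] else [:: r]) ++ runs_aux 0 s'
  end.
Definition true_runs (s : seq bool) : seq nat := runs_aux 0 s.

Definition adj_pattern (polys : seq polygon) (segs : seq segment) : seq bool :=
  map (adjacent_seg polys) segs.

Definition p_alpha (polys : seq polygon) (segs : seq segment) : nat :=
  count (fun g => ~~ adjacent_seg polys g) segs.

Definition q_alpha (polys : seq polygon) (segs : seq segment) : nat :=
  sumn (map half (true_runs (adj_pattern polys segs))).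

Definition odd_pattern (b : seq bool) : Prop :=
  forall i j, (i < j)%N -> (j < size b)%N ->
    ~~ nth false b i -> ~~ nth false b j ->
    (forall l, (i < l)%N -> (l < j)%N -> nth false b l) ->
    odd (j - i).-1.

Definition odd_sc (polys : seq polygon) (segs : seq segment) : Prop :=
  odd_pattern (adj_pattern polys segs).

End TranslationSurfaces.

(* The first and last segments of alpha start, resp. end, at a vertex, which
   lies in the relative interior of no side, so both are non-adjacent: the
   adjacency pattern of alpha is non-adjacent, B_1 adjacent, non-adjacent, ...,
   B_m adjacent, non-adjacent, with blocks of lengths b_1, ..., b_m >= 0 and
   p = m + 1.  Then k = p + sum b_i and q = sum floor(b_i / 2), so
   2 (p + q) = k + 1 + #{i | b_i even}.  Hence p + q >= (k + 1) / 2, with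
   equality exactly when every b_i is odd, i.e. when alpha is odd. *)
From mathcomp Require Import all_boot all_order all_algebra zify.
Set Implicit Arguments. Unset Strict Implicit. Unset Printing Implicit Defensive.
Import Order.TTheory GRing.Theory Num.Theory.

(* Lengths of the blocks of [true] delimited by the [false]s of [s], empty
   blocks included; the first block is lengthened by [r]. *)
Fixpoint true_blocks (r : nat) (s : seq bool) : seq nat :=
  match s with
  | [::] => [:: r]
  | true :: s' => true_blocks r.+1 s'
  | false :: s' => r :: true_blocks 0 s'
  end.

Lemma runs_aux_true_blocks r s : runs_aux r s = [seq n <- true_blocks r s | n != 0].
Proof. by elim: s r => [|[] s IH] [|r] //=; rewrite IH. Qed.

Lemma true_blocks_rcons_false r s :
  true_blocks r (rcons s false) = rcons (true_blocks r s) 0.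
Proof. by elim: s r => [|[] s IH] r //=; rewrite IH. Qed.

Lemma size_true_blocks r s : size (true_blocks r s) = (count negb s).+1.
Proof. by elim: s r => [|[] s IH] r //=; rewrite IH. Qed.

Lemma sumn_true_blocks r s : sumn (true_blocks r s) = r + count id s.
Proof. by elim: s r => [|[] s IH] r /=; rewrite ?IH; lia. Qed.

Lemma sumn_half_filter_neq0 (l : seq nat) :
  sumn (map half [seq n <- l | n != 0]) = sumn (map half l).
Proof. by elim: l => [|[|n] l IH] //=; rewrite IH. Qed.

Lemma double_sumn_half_count_odd (l : seq nat) :
  (sumn (map half l)).*2 + count odd l = sumn l.
Proof.
elim: l => [|n l IH] //=; rewrite -IH doubleD.
by have := odd_double_half n; lia.
Qed.

(* [r] counts the [true]s preceding [s]. *)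
Definition first_block_odd (r : nat) (s : seq bool) : Prop :=
  forall j, j < size s -> ~~ nth false s j -> (forall l, l < j -> nth false s l) ->
  odd (r + j).

Lemma first_block_odd_true r s : first_block_odd r (true :: s) <-> first_block_odd r.+1 s.
Proof.
split=> H j.
  move=> hj nj hl; rewrite addSnnS; apply: H => //.
  by case=> [//|l] /hl.
case: j => [//|j] hj nj hl; rewrite addnS -addSn; apply: H => // l hlj.
exact: (hl l.+1).
Qed.

Lemma first_block_odd_false r s : first_block_odd r (false :: s) <-> odd r.
Proof.
split=> [H|oddr [|j] _ _ hl]; last by have := hl 0 isT.
  by rewrite -[r]addn0; apply: H => // l; rewrite ltn0.
by rewrite addn0.
Qed.

Lemma odd_pattern_cons x s :
  odd_pattern (x :: s) <-> (~~ x -> first_block_odd 0 s) /\ odd_pattern s.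
Proof.
split=> [H|[H0 H] [|i] [|j] //= hij hj ni nj hl].
- split=> [nx j hj nsj hl|i j hij hj ni nj hl].
    rewrite add0n; apply: (H 0 j.+1) => //= -[|l] // _ /hl //.
  by rewrite -subSS; apply: (H i.+1 j.+1) => // -[|l] // h1 /hl; apply.
- by rewrite -[j]add0n; apply: H0 => // l hlj; apply: (hl l.+1).
- by rewrite subSS; apply: (H i j) => // l h1 h2; apply: (hl l.+1).
Qed.

Lemma odd_pattern_rcons_false r s :
  first_block_odd r (rcons s false) /\ odd_pattern (rcons s false) <->
  all odd (true_blocks r s).
Proof.
elim: s r => [|[] s IH] r /=.
- rewrite first_block_odd_false andbT; split=> [[]//|oddr]; split=> // i j hij hj.
  by case: j hij hj => [|[]].
- rewrite first_block_odd_true odd_pattern_cons -IH.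
  by split=> [[? []]|[]].
- rewrite first_block_odd_false odd_pattern_cons.
  split=> [[-> [/(_ isT) h1 h2]]|/andP[-> /IH[h1 h2]]]; last by split.
  by apply/IH.
Qed.

Lemma odd_pattern_blocks s :
  odd_pattern (false :: rcons s false) <-> all odd (true_blocks 0 s).
Proof.
rewrite odd_pattern_cons -odd_pattern_rcons_false.
by split=> [[/(_ isT)]|[]]; split.
Qed.

Lemma pattern_uphalf_bound (b : seq bool) :
  head true b = false -> last true b = false ->
  uphalf (size b) <= count negb b + sumn (map half (true_runs b)) /\
  (uphalf (size b) = count negb b + sumn (map half (true_runs b)) <-> odd_pattern b).
Proof.
case: b => [//|[//|] t] _ /=; case/lastP: t => [_|s x].
  by split=> //; split=> // _ i j hij hj; case: j hij hj => [|[]].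
rewrite last_rcons => ->.
rewrite odd_pattern_blocks /true_runs /= runs_aux_true_blocks sumn_half_filter_neq0.
rewrite true_blocks_rcons_false -!cats1 map_cat sumn_cat count_cat size_cat /= all_count.
have hhalf := double_sumn_half_count_odd (true_blocks 0 s).
have hodd := count_size odd (true_blocks 0 s).
have hsize : count id s + count negb s = size s := count_predC id s.
rewrite sumn_true_blocks in hhalf; rewrite size_true_blocks in hodd *.
have := odd_double_half (size s + 1); have := leq_b1 (odd (size s + 1)).
move: (odd _) (half _) => o u *.
split; first lia.
by split=> [?|/eqP ?]; [apply/eqP|]; lia.
Qed.

Lemma vertex_not_on_side_relint (R : realFieldType) (P : polygon R) i e :
  convex_polygon P -> i < size P -> e < size P -> on_side_relint P e (vtx P i) = false.
Proof.
move=> [_ hconv] hi he; rewrite /on_side_relint.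
have [->|ne] := eqVneq i e.
  by rewrite /dot /vsub !subrr !mulr0 addr0 ltxx andbF.
have [->|ne'] := eqVneq i (e.+1 %% size P).
  by rewrite /vtx modn_mod -/(vtx P e.+1) -/(side_vec P e) ltxx !andbF.
by rewrite gt_eqF // hconv.
Qed.

Lemma vertex_endpoint_not_adjacent (R : realFieldType) (polys : seq (polygon R)) g :
  P1 polys -> seg_poly g < size polys ->
  is_vertex (segP polys g) (seg_start g) \/ is_vertex (segP polys g) (seg_end g) ->
  adjacent_seg polys g = false.
Proof.
move=> hP hg hvtx; apply/negbTE/hasP => -[e]; rewrite mem_iota => /andP[_ he].
move=> /hasP[e']; rewrite mem_iota => /andP[_ he'] /and3P[hs he_ _].
have [hconv _] := hP _ (mem_nth [::] hg).
by case: hvtx => -[i hi hv]; [move: hs | move: he_];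
   rewrite hv vertex_not_on_side_relint.
Qed.

Theorem mainTheorem7 (R : realFieldType) (polys : seq (polygon R))
    (glue : nat * nat -> nat * nat) (segs : seq (segment R)) :
  translation_surface polys glue -> P1 polys -> P2 polys glue ->
  saddle_connection_decomp polys glue segs ->
  (* alpha is not a diagonal (nor a side): k >= 2 *)
  (2 <= size segs)%N ->
  (uphalf (size segs) <= p_alpha polys segs + q_alpha polys segs)%N /\
  (uphalf (size segs) = p_alpha polys segs + q_alpha polys segs <-> odd_sc polys segs).
Proof.
move=> _ hP _ [hne hpoly _ _ [hstart hend _]] _.
have [hhead hlast] : head true (adj_pattern polys segs) = false /\
                     last true (adj_pattern polys segs) = false.
  case: segs hne hpoly hstart hend => [//|g t] _ hpoly hs he /=.
  rewrite last_map !vertex_endpoint_not_adjacent //; [| by right | | by left].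
  - apply: hpoly; exists (size t) => //.
    by rewrite -[last g t]/(last (seg0 R) (g :: t)) -nth_last.
  - by apply: hpoly; exists 0.
have := pattern_uphalf_bound hhead hlast.
by rewrite size_map /p_alpha /q_alpha /odd_sc /adj_pattern count_map.
Qed.
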